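(* Let $f(X,I)=f_0(I)+f_1(I)X+f_2(I)X^2$ be an $X^2$-model with $f_{20}:=f_2(0)\neq1$, and for $\beta=(\beta_1,\beta_2)$, $\beta_1>\beta_2$, let $\theta_i:=A_i(1)-A_i(0)$, $i=1,2$. Let $Y_-\le Y_+$ denote the zeros (when real) of $z\mapsto h_f(z,1)-h_f(z,0)=(1-f_{20})(z-Y_+)(z-Y_-)$. (i) $\theta_1=\theta_2=0$ if and only if $Y_\pm$ are real and $(\beta_1,\beta_2)=(Y_+,Y_-)$. (ii) If $f$ is admissible, then there exists an $f$-compatible $\beta$ with $\theta_1=\theta_2=0$ if and only if $(Y_+,Y_-)\in\mathcal{B}_f$.
   Context: $f_0,f_1,f_2$ smooth on $[0,\infty)$; $\lambda:=f_0(1)$, $P_f(I):=(f_0(I)-\lambda I)/(1-I)$ (smoothly extended to $I=1$), $h_f(z,I):=P_f(I)+zf_1(I)+z^2(I+(1-I)f_2(I))$, $A_i(I):=h_f(\beta_i,I)/(\beta_j-\beta_i)$ for $\{i,j\}=\{1,2\}$. $\beta$ with $\beta_1>\beta_2$ is $f$-compatible if $\beta_2\le\lambda\le\beta_1$ and $A_1,A_2\ge0$ on $[0,1]$; $\mathcal{B}_f$ is the set of $f$-compatible pairs, and $f$ is admissible iff $\mathcal{B}_f\ne\emptyset$. (In the associated SSISS model, $A_i(I)$ is the transfer rate out of compartment $S_i$ at $S_j=0$.) *)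

From Stdlib Require Import Reals.
From Coquelicot Require Import Coquelicot.
Open Scope R_scope.

Definition smooth_R (g : R -> R) : Prop :=
  forall (n : nat) (x : R), ex_derive_n g n x.

Definition smooth_nonneg (f : R -> R) : Prop :=
  exists g : R -> R, smooth_R g /\ forall x, 0 <= x -> f x = g x.

Definition lam (f0 : R -> R) : R := f0 1.

Definition Pquot (f0 : R -> R) (I : R) : R := (f0 I - lam f0 * I) / (1 - I).

Definition Pf (f0 : R -> R) (I : R) : R :=
  if Req_EM_T I 1 then real (Lim (Pquot f0) 1) else Pquot f0 I.

Definition hf (f0 f1 f2 : R -> R) (z I : R) : R :=
  Pf f0 I + z * f1 I + z ^ 2 * (I + (1 - I) * f2 I).

Definition Ai (f0 f1 f2 : R -> R) (bi bj : R) (I : R) : R :=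
  hf f0 f1 f2 bi I / (bj - bi).

Definition compatible (f0 f1 f2 : R -> R) (b1 b2 : R) : Prop :=
  b1 > b2 /\ b2 <= lam f0 <= b1 /\
  (forall I, 0 <= I <= 1 -> 0 <= Ai f0 f1 f2 b1 b2 I /\ 0 <= Ai f0 f1 f2 b2 b1 I).

Definition admissible (f0 f1 f2 : R -> R) : Prop :=
  exists b1 b2, compatible f0 f1 f2 b1 b2.

Definition theta1 (f0 f1 f2 : R -> R) (b1 b2 : R) : R :=
  Ai f0 f1 f2 b1 b2 1 - Ai f0 f1 f2 b1 b2 0.

Definition theta2 (f0 f1 f2 : R -> R) (b1 b2 : R) : R :=
  Ai f0 f1 f2 b2 b1 1 - Ai f0 f1 f2 b2 b1 0.

Definition Yroots (f0 f1 f2 : R -> R) (Yp Ym : R) : Prop :=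
  Ym <= Yp /\
  forall z, hf f0 f1 f2 z 1 - hf f0 f1 f2 z 0 = (1 - f2 0) * (z - Yp) * (z - Ym).

From Stdlib Require Import Reals Lra.
From Coquelicot Require Import Coquelicot.
Open Scope R_scope.

(* Since A_i(1) - A_i(0) = D(β_i)/(β_j - β_i) with D(z) := h_f(z,1) - h_f(z,0),
   θ_i vanishes exactly when β_i is a root of the quadratic D.  A quadratic
   vanishing at two distinct points β_1 > β_2 equals c (z - β_1)(z - β_2), with c
   its leading coefficient, so θ_1 = θ_2 = 0 identifies (β_1, β_2) with (Y_+, Y_-).
   Part (ii) follows from part (i) because compatibility includes β_1 > β_2. *)

Lemma quadratic_factor_two_roots (a b c p q : R) :
  p <> q -> a * p ^ 2 + b * p + c = 0 -> a * q ^ 2 + b * q + c = 0 ->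
  forall z, a * z ^ 2 + b * z + c = a * (z - p) * (z - q).
Proof.
  intros Hpq Hp Hq z.
  assert (Hb : b = - a * (p + q)).
  { assert (E : (p - q) * (a * (p + q) + b) = 0) by lra.
    apply Rmult_integral in E as [E | E]; lra. }
  assert (Hc : c = a * p * q) by (subst b; lra).
  rewrite Hb, Hc; ring.
Qed.

Lemma hf_diff_quadratic (f0 f1 f2 : R -> R) (z : R) :
  hf f0 f1 f2 z 1 - hf f0 f1 f2 z 0 =
  (1 - f2 0) * z ^ 2 + (f1 1 - f1 0) * z + (Pf f0 1 - Pf f0 0).
Proof. unfold hf; ring. Qed.

Lemma Ai_diff_eq0 (f0 f1 f2 : R -> R) (bi bj : R) : bi <> bj ->
  (Ai f0 f1 f2 bi bj 1 - Ai f0 f1 f2 bi bj 0 = 0 <->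
   hf f0 f1 f2 bi 1 - hf f0 f1 f2 bi 0 = 0).
Proof.
  intros Hij; assert (Hd : bj - bi <> 0) by lra.
  unfold Ai; set (x := hf f0 f1 f2 bi 1); set (y := hf f0 f1 f2 bi 0).
  replace (x / (bj - bi) - y / (bj - bi)) with ((x - y) / (bj - bi))
    by (field; exact Hd).
  split; intro E.
  - replace (x - y) with ((x - y) / (bj - bi) * (bj - bi)) by (field; exact Hd).
    rewrite E; ring.
  - rewrite E; unfold Rdiv; ring.
Qed.

Lemma theta_eq0_iff_Yroots (f0 f1 f2 : R -> R) (b1 b2 : R) : b1 > b2 ->
  (theta1 f0 f1 f2 b1 b2 = 0 /\ theta2 f0 f1 f2 b1 b2 = 0 <->
   exists Yp Ym, Yroots f0 f1 f2 Yp Ym /\ b1 = Yp /\ b2 = Ym).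
Proof.
  intros H12; unfold theta1, theta2.
  rewrite (Ai_diff_eq0 f0 f1 f2 b1 b2), (Ai_diff_eq0 f0 f1 f2 b2 b1) by lra.
  split.
  - intros [D1 D2]; exists b1, b2; repeat split; try lra.
    intro z; rewrite !hf_diff_quadratic in *.
    apply quadratic_factor_two_roots; auto; lra.
  - intros (Yp & Ym & [_ HY] & -> & ->); rewrite !HY; split; ring.
Qed.

Lemma compatible_theta_eq0_iff (f0 f1 f2 : R -> R) :
  (exists b1 b2, compatible f0 f1 f2 b1 b2 /\
     theta1 f0 f1 f2 b1 b2 = 0 /\ theta2 f0 f1 f2 b1 b2 = 0) <->
  exists Yp Ym, Yroots f0 f1 f2 Yp Ym /\ compatible f0 f1 f2 Yp Ym.
Proof.
  split.
  - intros (b1 & b2 & Hc & Ht).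
    destruct (proj1 (theta_eq0_iff_Yroots f0 f1 f2 b1 b2 (proj1 Hc)) Ht)
      as (Yp & Ym & HY & -> & ->).
    exists Yp, Ym; auto.
  - intros (Yp & Ym & HY & Hc); exists Yp, Ym; split; [exact Hc |].
    apply (theta_eq0_iff_Yroots f0 f1 f2 Yp Ym (proj1 Hc)).
    exists Yp, Ym; auto.
Qed.

Theorem corollary5p4 (f0 f1 f2 : R -> R)
  (Hf0 : smooth_nonneg f0) (Hf1 : smooth_nonneg f1) (Hf2 : smooth_nonneg f2)
  (Hf20 : f2 0 <> 1) :
  (forall b1 b2 : R, b1 > b2 ->
     (theta1 f0 f1 f2 b1 b2 = 0 /\ theta2 f0 f1 f2 b1 b2 = 0 <->
      exists Yp Ym, Yroots f0 f1 f2 Yp Ym /\ b1 = Yp /\ b2 = Ym)) /\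
  (admissible f0 f1 f2 ->
     ((exists b1 b2, compatible f0 f1 f2 b1 b2 /\
         theta1 f0 f1 f2 b1 b2 = 0 /\ theta2 f0 f1 f2 b1 b2 = 0) <->
      exists Yp Ym, Yroots f0 f1 f2 Yp Ym /\ compatible f0 f1 f2 Yp Ym)).
Proof.
  split.
  - exact (theta_eq0_iff_Yroots f0 f1 f2).
  - intros _; exact (compatible_theta_eq0_iff f0 f1 f2).
Qed.
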